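(* Let $B \in \mathbb{R}^{n \times m}$, $c \in \mathbb{R}^m_>$, and let $C = C_1 \times \cdots \times C_\ell \subseteq \mathbb{R}^m_>$ be a nonempty cone with cones $C_i \subseteq \mathbb{R}^{m_i}_>$, $m_1+\cdots+m_\ell=m$. With $P$, $L$, $M$, $I$, $d$ as in the context, let $M^*$ be any generalized inverse of $M$ ($MM^*M=M$) and $E = I M^*$. If $d = 0$, then \[ Z_c := \{x\in\mathbb{R}^n_> \mid (c\circ x^B)\in C\} = \{ (y\circ c^{-1})^E \mid y \in P\} \circ e^{L^\perp}; \] in particular, $Z_c \neq \emptyset$ for every $c \in \mathbb{R}^m_>$. Moreover, $Z_c$ consists of exactly one point if and only if $\dim P = 0$ and $\dim L^\perp = 0$.
   Context: Notation: for $x\in\mathbb{R}^n_>$, $y\in\mathbb{R}^n$, $x^y=\prod_i x_i^{y_i}$; for $Y=(y^1,\ldots,y^m)$, $(x^Y)_j=x^{y^j}$; $\circ$ is the componentwise product, $c^{-1}$ componentwise inverse, $S\circ e^{V}=\{s\circ e^v\mid s\in S, v\in V\}$. A cone is a set closed under positive scaling. The partition splits indices into $\ell$ consecutive classes, $B=(B_1\ \cdots\ B_\ell)$. $\Delta=\Delta_{m_1-1}\times\cdots\times\Delta_{m_\ell-1}$ with $\Delta_{m_i-1}=\{y\in\mathbb{R}^{m_i}_{\ge}\mid\sum_j y_j=1\}$; $P=C\cap\Delta$ (its dimension is that of its affine hull). $I_k=\begin{pmatrix}\mathrm{id}_{k-1}\\-1_{k-1}^{\mathsf T}\end{pmatrix}$,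 $I=\mathrm{diag}(I_{m_1},\ldots,I_{m_\ell})\in\mathbb{R}^{m\times(m-\ell)}$, $M=BI$, $L=\operatorname{im}M$, $d=\dim\ker M$. *)

From HB Require Import structures.
From mathcomp Require Import all_boot all_order all_algebra.
From mathcomp Require Import all_classical all_reals all_analysis.
Set Implicit Arguments. Unset Strict Implicit. Unset Printing Implicit Defensive.
Import Order.TTheory GRing.Theory Num.Theory.
Local Open Scope classical_set_scope.
Local Open Scope ring_scope.

Section Defs.
Variable R : realType.

Definition posv k (x : 'cV[R]_k) : Prop := forall i, 0 < x i 0.

Definition hadm k (x y : 'cV[R]_k) : 'cV[R]_k := \col_i (x i 0 * y i 0).
Definition invv k (x : 'cV[R]_k) : 'cV[R]_k := \col_i (x i 0)^-1.
Definition expv k (x : 'cV[R]_k) : 'cV[R]_k := \col_i expR (x i 0).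

Definition mpow p q (x : 'cV[R]_p) (Y : 'M[R]_(p, q)) : 'cV[R]_q :=
  \col_j \prod_(i < p) ((x i 0) `^ (Y i j)).

Definition is_cone k (S : set 'cV[R]_k) : Prop :=
  forall t y, 0 < t -> S y -> S (t *: y).

Variables (l : nat) (ms : 'I_l -> nat).
Local Notation m := (\sum_(i < l) ms i)%N.
Local Notation m' := (\sum_(i < l) (ms i).-1)%N.

Definition blk (i : 'I_l) (y : 'cV[R]_m) : 'cV[R]_(ms i) :=
  \col_(a < ms i) y (tagnat.Rank i a) 0.

Definition prodC (Cs : forall i : 'I_l, set 'cV[R]_(ms i)) : set 'cV[R]_m :=
  [set y | forall i, Cs i (blk i y)].

Definition simplex k (y : 'cV[R]_k) : Prop :=
  (forall a, 0 <= y a 0) /\ \sum_(a < k) y a 0 = 1.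
Definition Delta : set 'cV[R]_m := [set y | forall i, simplex (blk i y)].

Definition Pset Cs : set 'cV[R]_m := prodC Cs `&` Delta.

(* I = diag(I_{m_1}, ..., I_{m_l}), I_k = (id_{k-1} ; -1^T) *)
Definition Imx : 'M[R]_(m, m') :=
  \matrix_(r, s)
    let i := tagnat.sig1 r in let a := tagnat.sig2 r in
    let j := tagnat.sig1 s in let b := tagnat.sig2 s in
    if i == j then
      (if (a : nat) == (b : nat) then 1
       else if (a : nat) == (ms i).-1 then -1 else 0)
    else 0.

End Defs.

Definition imcols (R : realType) p q (M : 'M[R]_(p, q)) : set 'cV[R]_p :=
  [set w | exists u : 'cV[R]_q, w = M *m u].
Definition orthc (R : realType) p (S : set 'cV[R]_p) : set 'cV[R]_p :=
  [set v | forall w, S w -> v^T *m w = 0].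

(* dimension of the kernel of M : 'M_(p,q): kermx M^T has as row space
   {u : 'rV_q | u *m M^T = 0} = (ker M)^T *)
Definition dimker (R : realType) p q (M : 'M[R]_(p, q)) : nat := \rank (kermx M^T).
(* dimension of (im M)^perp: kermx M has row space {v : 'rV_p | v *m M = 0},
   i.e. the transposes of the v with v ⊥ im M *)
Definition dimorth_im (R : realType) p q (M : 'M[R]_(p, q)) : nat := \rank (kermx M).

(* dimension of (the affine hull of) a set S of R^k is k0 :
   S nonempty, there are k0 linearly independent differences of points of S,
   and no k0+1 such differences are linearly independent *)
Definition diffs (R : realType) k r0 (S : set 'cV[R]_k) (A : 'M[R]_(r0, k)) : Prop :=
  forall r, exists p q, S p /\ S q /\ row r A = (p - q)^T.
Definition is_affdim (R : realType) k (S : set 'cV[R]_k) (k0 : nat) : Prop :=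
  (exists p, S p) /\
  (exists A : 'M[R]_(k0, k), diffs S A /\ row_free A) /\
  (forall A : 'M[R]_(k0.+1, k), diffs S A -> ~~ row_free A).

(* Since d = 0, the generalized inverse M^* is a left inverse of M = B I, so
   E = I M^* satisfies M^T E^T = I^T.  The kernel of I^T consists of the
   blockwise constant vectors, so ln z - ln y lies in it iff z is a blockwise
   positive rescaling of y.  For y in P and v in L^perp the point
   x = exp (E^T ln (y / c) + v) satisfies I^T (ln (c o x^B) - ln y) = M^T v = 0,
   hence c o x^B is a blockwise rescaling of y and lies in the cone C.
   Conversely every point of C rescales blockwise to a unique point of P.  The
   map (y, v) |-> x is injective, so Z_c is a single point iff both P and
   L^perp are. *)

From HB Require Import structures.
From mathcomp Require Import all_boot all_order all_algebra.
From mathcomp Require Import all_classical all_reals all_analysis.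
Import Order.TTheory GRing.Theory Num.Theory.
Local Open Scope classical_set_scope.
Local Open Scope ring_scope.
Set Implicit Arguments. Unset Strict Implicit.

Lemma set1_image2 (T U V : Type) (A : set T) (B : set U) (f : T -> U -> V) :
    (forall a a' b b', A a -> A a' -> B b -> B b' ->
       f a b = f a' b' -> a = a' /\ b = b') ->
    A !=set0 -> B !=set0 ->
  (exists z, [set z | exists a b, A a /\ B b /\ z = f a b] = [set z]) <->
  is_subset1 A /\ is_subset1 B.
Proof.
move=> f_inj [a0 Aa0] [b0 Bb0]; split=> [[z fABz] | [A1 B1]].
  have fz a b : A a -> B b -> f a b = z.
    by move=> Aa Bb; have : [set z] (f a b) by rewrite -fABz; exists a, b.
  split=> [a a' Aa Aa' | b b' Bb Bb'].
    by case: (f_inj a a' b0 b0) => //; rewrite !fz.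
  by case: (f_inj a0 a0 b b') => //; rewrite !fz.
exists (f a0 b0); apply/seteqP; split=> [_ [a [b [Aa [Bb ->]]]] | _ ->] /=.
  by rewrite (A1 a a0) // (B1 b b0).
by exists a0, b0.
Qed.

Section PositiveVectors.
Variable R : realType.
Implicit Types (k : nat).

Definition lnv k (x : 'cV[R]_k) : 'cV[R]_k := \col_i ln (x i 0).

Lemma posv_expv k (v : 'cV[R]_k) : posv (expv v).
Proof. by move=> i; rewrite mxE expR_gt0. Qed.

Lemma posv_hadm k (x y : 'cV[R]_k) : posv x -> posv y -> posv (hadm x y).
Proof. by move=> hx hy i; rewrite mxE mulr_gt0. Qed.

Lemma posv_invv k (x : 'cV[R]_k) : posv x -> posv (invv x).
Proof. by move=> hx i; rewrite mxE invr_gt0. Qed.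

Lemma lnvK k (x : 'cV[R]_k) : posv x -> expv (lnv x) = x.
Proof.
by move=> hx; apply/matrixP=> i j; rewrite (ord1 j) !mxE lnK // posrE.
Qed.

Lemma expvK k (v : 'cV[R]_k) : lnv (expv v) = v.
Proof. by apply/matrixP=> i j; rewrite (ord1 j) !mxE expRK. Qed.

Lemma expv_inj k : injective (@expv R k).
Proof. by move=> a b eab; rewrite -(expvK a) eab expvK. Qed.

Lemma expvD k (a b : 'cV[R]_k) : expv (a + b) = hadm (expv a) (expv b).
Proof. by apply/matrixP=> i j; rewrite !mxE expRD. Qed.

Lemma lnvM k (x y : 'cV[R]_k) :
  posv x -> posv y -> lnv (hadm x y) = lnv x + lnv y.
Proof. by move=> hx hy; apply/matrixP=> i j; rewrite !mxE lnM // posrE. Qed.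

Lemma lnvV k (x : 'cV[R]_k) : posv x -> lnv (invv x) = - lnv x.
Proof. by move=> hx; apply/matrixP=> i j; rewrite !mxE lnV // posrE. Qed.

Lemma mpowE p q (x : 'cV[R]_p) (Y : 'M[R]_(p, q)) :
  posv x -> mpow x Y = expv (Y^T *m lnv x).
Proof.
move=> hx; apply/matrixP=> j k; rewrite !mxE expR_sum; apply: eq_bigr => i _.
by rewrite !mxE /powR gt_eqF // mulrC.
Qed.

Lemma posv_mpow p q (x : 'cV[R]_p) (Y : 'M[R]_(p, q)) :
  posv x -> posv (mpow x Y).
Proof. by move=> hx; rewrite mpowE //; apply: posv_expv. Qed.

End PositiveVectors.

Section LinearAlgebra.
Variable R : realType.
Variables p q : nat.
Implicit Types (M : 'M[R]_(p, q)) (v : 'cV[R]_p).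

Lemma orthc_imcolsE M v : orthc (imcols M) v <-> M^T *m v = 0.
Proof.
split=> [vM | Mv _ [u ->]].
  apply: trmx_inj; apply/rowP=> b; rewrite trmx_mul trmxK trmx0.
  have /matrixP/(_ 0 0) := vM (M *m delta_mx b 0) (ex_intro _ _ erefl).
  by rewrite mulmxA -colE !mxE.
by rewrite mulmxA -[v^T *m M]trmxK trmx_mul trmxK Mv trmx0 mul0mx.
Qed.

Lemma ginv_left_inverse M (G : 'M[R]_(q, p)) :
  dimker M = 0%N -> M *m G *m M = M -> G *m M = 1%:M.
Proof.
move=> /eqP; rewrite mxrank_eq0 => /eqP kerM0 MGM.
apply/eqP; rewrite -subr_eq0 -trmx_eq0 -submx0 -kerM0; apply/sub_kermxP.
by rewrite -trmx_mul mulmxBr mulmx1 mulmxA MGM subrr trmx0.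
Qed.

Lemma dimorth_im_eq0 M : dimorth_im M = 0%N <-> is_subset1 (orthc (imcols M)).
Proof.
have orth0 : orthc (imcols M) 0 by apply/orthc_imcolsE; rewrite mulmx0.
split=> [/eqP | orth1].
  rewrite mxrank_eq0 => /eqP kerM0.
  suff v0 v : orthc (imcols M) v -> v = 0 by move=> v w /v0 -> /v0 ->.
  move=> /orthc_imcolsE Mv; apply/eqP; rewrite -trmx_eq0 -submx0 -kerM0.
  apply/sub_kermxP.
  by rewrite -[M]trmxK -trmx_mul Mv trmx0.
apply/eqP; rewrite mxrank_eq0; apply/eqP/row_matrixP => k; rewrite row0.
apply: trmx_inj; rewrite trmx0; apply: orth1 => //; apply/orthc_imcolsE.
by rewrite -trmx_mul -row_mul mulmx_ker row0 trmx0.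
Qed.

End LinearAlgebra.

Lemma is_affdim0 (R : realType) k (S : set 'cV[R]_k) :
  is_affdim S 0 <-> S !=set0 /\ is_subset1 S.
Proof.
split=> [[S0 [_ notfree]] | [S0 S1]].
  split=> // x y Sx Sy; apply/eqP; rewrite -subr_eq0; apply/eqP/trmx_inj.
  have diffs_xy : diffs S (x - y)^T.
    move=> r; exists x, y; do !split=> //.
    by apply/rowP=> j; rewrite (ord1 r) !mxE.
  have := notfree _ diffs_xy; rewrite /row_free trmx0 => rk1.
  apply/eqP; rewrite -mxrank_eq0.
  by move: rk1 (rank_leq_row (x - y)^T); case: (\rank _) => [|[|]].
split=> //; split.
  by exists 0; split=> [[] //|]; rewrite /row_free mxrank0.
move=> A diffsA; have [x [y [Sx [Sy rA]]]] := diffsA 0.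
have A0 : A = 0.
  by apply/row_matrixP=> r; rewrite (ord1 r) row0 rA (S1 x y) // subrr trmx0.
by rewrite A0 /row_free mxrank0.
Qed.

Section Blocks.
Variables (R : realType) (l : nat) (ms : 'I_l -> nat).
Hypothesis ms_gt0 : forall i, (0 < ms i)%N.
Local Notation m := (\sum_(i < l) ms i)%N.
Local Notation m' := (\sum_(i < l) (ms i).-1)%N.
Local Notation Imx := (Imx R ms).

Definition blk_ord (i : 'I_l) (a : 'I_(ms i)) : 'I_m := @tagnat.Rank l ms i a.
Definition blk_ord' (i : 'I_l) (b : 'I_(ms i).-1) : 'I_m' :=
  @tagnat.Rank l (fun i => (ms i).-1) i b.

Definition blk_last i : 'I_(ms i) :=
  Ordinal (etrans (ltn_predL (ms i)) (ms_gt0 i)).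

Lemma eq_blk_ord r j (a : 'I_(ms j)) :
  (r == blk_ord a) = (tagnat.sig1 r == j) && (tagnat.sig2 r == a :> nat).
Proof. by rewrite -val_eqE -{1}(tagnat.sig2K r) tagnat.eq_Rank. Qed.

Lemma ImxE r j (b : 'I_(ms j).-1) :
  Imx r (blk_ord' b) =
  (r == blk_ord (widen_ord (leq_pred _) b))%:R - (r == blk_ord (blk_last j))%:R.
Proof.
rewrite mxE /blk_ord' tagnat.Rank2K /= tagnat.Rank1K !eq_blk_ord /=.
case: (tagnat.sig1 r =P j) => [rj | _] /=; last by rewrite subrr.
have -> : (ms (tagnat.sig1 r)).-1 = (ms j).-1 by rewrite rj.
case: eqP => [ra | _]; case: eqP => [rb | _]; rewrite ?subr0 ?sub0r //.
by have := ltn_ord b; rewrite -ra rb ltnn.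
Qed.

Lemma trImx_mulE (w : 'cV[R]_m) j (b : 'I_(ms j).-1) :
  (Imx^T *m w) (blk_ord' b) 0 =
  w (blk_ord (widen_ord (leq_pred _) b)) 0 - w (blk_ord (blk_last j)) 0.
Proof.
rewrite mxE; under eq_bigr => r _ do rewrite mxE ImxE mulrBl !mulr_natl !mulrb.
by rewrite sumrB -!big_mkcond !big_pred1_eq.
Qed.

Lemma trImx_mul_eq0P (w : 'cV[R]_m) :
  Imx^T *m w = 0 <->
  exists lam : 'I_l -> R, forall i (a : 'I_(ms i)), w (blk_ord a) 0 = lam i.
Proof.
split=> [Iw0 | [lam wE]].
  exists (fun i => w (blk_ord (blk_last i)) 0) => i a.
  have [a_lt | a_ge] := ltnP a (ms i).-1.
    have -> : a = widen_ord (leq_pred _) (Ordinal a_lt) by apply: val_inj.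
    have := trImx_mulE w (Ordinal a_lt); rewrite Iw0 mxE => /esym/eqP.
    by rewrite subr_eq0 => /eqP.
  have -> // : a = blk_last i.
  by apply/val_inj/eqP; rewrite /= eqn_leq a_ge andbT -ltnS prednK.
apply/matrixP=> s k; rewrite (ord1 k) [RHS]mxE -(tagnat.sig2K s).
by rewrite [LHS]trImx_mulE !wE subrr.
Qed.

Lemma blk_ext (y z : 'cV[R]_m) : (forall i, blk i y = blk i z) -> y = z.
Proof.
move=> yz; apply/matrixP=> r k; rewrite (ord1 k) -(tagnat.sig2K r).
by have /matrixP/(_ (tagnat.sig2 r) 0) := yz (tagnat.sig1 r); rewrite !mxE.
Qed.

Definition blk_rescaled (y z : 'cV[R]_m) : Prop :=
  exists2 t : 'I_l -> R, forall i, 0 < t i & forall i, blk i z = t i *: blk i y.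

Lemma trImx_lnvB_eq0P (y z : 'cV[R]_m) : posv y -> posv z ->
  Imx^T *m (lnv z - lnv y) = 0 <-> blk_rescaled y z.
Proof.
move=> y_pos z_pos; rewrite trImx_mul_eq0P.
split=> [[lam lnzy] | [t t_pos zty]].
  exists (fun i => expR (lam i)) => [i | i]; first exact: expR_gt0.
  apply/matrixP=> a k; rewrite (ord1 k) !mxE -(lnzy i a) !mxE expRB.
  by rewrite /blk_ord !lnK ?posrE // divfK // gt_eqF.
exists (fun i => ln (t i)) => i a.
have /matrixP/(_ a 0) := zty i; rewrite !mxE => ->.
by rewrite lnM ?posrE // addrK.
Qed.

Lemma blk_rescaled_Delta_eq (y z : 'cV[R]_m) :
  Delta y -> Delta z -> blk_rescaled y z -> y = z.
Proof.
move=> Dy Dz [t _ zty]; apply: blk_ext => i.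
have t1 : t i = 1.
  have := (Dz i).2; rewrite zty.
  under eq_bigr do rewrite mxE.
  by rewrite -mulr_sumr (Dy i).2 mulr1.
by rewrite zty t1 scale1r.
Qed.

End Blocks.

Section ProductCone.
Variables (R : realType) (l : nat) (ms : 'I_l -> nat).
Hypothesis ms_gt0 : forall i, (0 < ms i)%N.
Local Notation m := (\sum_(i < l) ms i)%N.
Variable Cs : forall i : 'I_l, set 'cV[R]_(ms i).
Arguments Cs : clear implicits.
Hypothesis Cs_cone : forall i, is_cone (Cs i).
Hypothesis Cs_pos : forall i y, Cs i y -> posv y.

Lemma prodC_posv (y : 'cV[R]_m) : prodC Cs y -> posv y.
Proof.
move=> Cy r; rewrite -(tagnat.sig2K r).
by have := Cs_pos (Cy (tagnat.sig1 r)) (tagnat.sig2 r); rewrite mxE.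
Qed.

Lemma prodC_blk_rescaled (y z : 'cV[R]_m) :
  prodC Cs y -> blk_rescaled y z -> prodC Cs z.
Proof. by move=> Cy [t t_pos zty] i; rewrite zty; apply: Cs_cone. Qed.

Lemma prodC_normalize (z : 'cV[R]_m) :
  prodC Cs z -> exists2 y, Pset Cs y & blk_rescaled y z.
Proof.
move=> Cz; have z_pos := prodC_posv Cz.
pose s i := \sum_(a < ms i) blk i z a 0.
have s_gt0 i : 0 < s i.
  rewrite /s (bigD1 (blk_last ms_gt0 i)) //= mxE.
  rewrite ltr_pwDl ?z_pos // sumr_ge0 // => a _.
  by rewrite mxE ltW ?z_pos.
pose y := \col_r (z r 0 / s (tagnat.sig1 r)).
have yz i : blk i y = (s i)^-1 *: blk i z.
  by apply/matrixP=> a k; rewrite !mxE tagnat.Rank1K mulrC.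
have zy : blk_rescaled y z.
  by exists s => // i; rewrite yz scalerA divff ?scale1r // gt_eqF.
exists y => //; split.
  apply: prodC_blk_rescaled Cz _.
  by exists (fun i => (s i)^-1) => // i; rewrite invr_gt0.
move=> i; rewrite yz; split=> [a | ].
  by rewrite mxE mulr_ge0 ?invr_ge0 ?ltW ?z_pos ?s_gt0 // mxE.
under eq_bigr do rewrite mxE.
by rewrite -mulr_sumr mulVf ?gt_eqF.
Qed.

End ProductCone.

Section Parametrization.
Variables (R : realType) (n l : nat) (ms : 'I_l -> nat).
Hypothesis ms_gt0 : forall i, (0 < ms i)%N.
Local Notation m := (\sum_(i < l) ms i)%N.
Local Notation m' := (\sum_(i < l) (ms i).-1)%N.
Local Notation Imx := (Imx R ms).
Variables (B : 'M[R]_(n, m)) (c : 'cV[R]_m) (Mg : 'M[R]_(m', n)).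
Hypothesis c_pos : posv c.
Local Notation M := (B *m Imx).
Local Notation E := (Imx *m Mg).
Hypothesis Mg_left_inverse : Mg *m M = 1%:M.
Variable Cs : forall i : 'I_l, set 'cV[R]_(ms i).
Arguments Cs : clear implicits.
Hypothesis Cs_cone : forall i, is_cone (Cs i).
Hypothesis Cs_pos : forall i y, Cs i y -> posv y.

Definition Zc : set 'cV[R]_n :=
  [set x | posv x /\ prodC Cs (hadm c (mpow x B))].

Definition Zc_param (y : 'cV[R]_m) (v : 'cV[R]_n) : 'cV[R]_n :=
  hadm (mpow (hadm y (invv c)) E) (expv v).

Lemma Zc_paramE y v :
  posv y -> Zc_param y v = expv (E^T *m lnv (hadm y (invv c)) + v).
Proof.
by move=> y_pos; rewrite /Zc_param mpowE ?expvD //; apply/posv_hadm/posv_invv.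
Qed.

Lemma trImx_lnv_monomial y v : posv y ->
  Imx^T *m (lnv (hadm c (mpow (Zc_param y v) B)) - lnv y) = M^T *m v.
Proof.
move=> y_pos; set w := lnv (hadm y (invv c)).
rewrite Zc_paramE // mpowE; last exact: posv_expv.
rewrite expvK lnvM ?expvK //; last exact: posv_expv.
have wE : w = lnv y - lnv c by rewrite /w lnvM ?lnvV //; apply: posv_invv.
have -> : lnv c + B^T *m (E^T *m w + v) - lnv y =
          B^T *m E^T *m w - w + B^T *m v.
  rewrite mulmxDr mulmxA {3}wE.
  move: (B^T *m E^T *m w) (B^T *m v) => X V.
  by rewrite opprB addrCA -!addrA (addrC V).
have EM : E *m M = Imx by rewrite -mulmxA Mg_left_inverse mulmx1.
by rewrite mulmxDr mulmxBr !mulmxA -!trmx_mul EM subrr add0r.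
Qed.

Lemma posv_Zc_param y v : posv y -> posv (Zc_param y v).
Proof. by move=> y_pos; rewrite Zc_paramE //; apply: posv_expv. Qed.

Lemma posv_monomial x : posv x -> posv (hadm c (mpow x B)).
Proof. by move=> x_pos; apply/posv_hadm/posv_mpow. Qed.

Lemma Zc_param_mem y v : Pset Cs y -> M^T *m v = 0 -> Zc (Zc_param y v).
Proof.
move=> [Cy _] Mv; have y_pos := prodC_posv Cs_pos Cy.
have x_pos := posv_Zc_param v y_pos.
split=> //; apply: (prodC_blk_rescaled Cs_cone Cy).
apply/(trImx_lnvB_eq0P ms_gt0 y_pos (posv_monomial x_pos)).
by rewrite trImx_lnv_monomial.
Qed.

Lemma Zc_param_surj x :
  Zc x -> exists y v, Pset Cs y /\ M^T *m v = 0 /\ x = Zc_param y v.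
Proof.
move=> [x_pos Cz]; have [y Py yz] := prodC_normalize ms_gt0 Cs_cone Cs_pos Cz.
have y_pos := prodC_posv Cs_pos Py.1.
pose v := lnv x - E^T *m lnv (hadm y (invv c)).
have xE : x = Zc_param y v by rewrite Zc_paramE // addrC subrK lnvK.
exists y, v; split=> //; split=> //.
rewrite -(trImx_lnv_monomial v y_pos) -xE.
exact/(trImx_lnvB_eq0P ms_gt0 y_pos (posv_monomial x_pos)).
Qed.

Lemma Zc_param_inj y y' v v' : Pset Cs y -> Pset Cs y' ->
  M^T *m v = 0 -> M^T *m v' = 0 -> Zc_param y v = Zc_param y' v' ->
  y = y' /\ v = v'.
Proof.
move=> [Cy Dy] [Cy' Dy'] Mv Mv' yv_y'v'.
have y_pos := prodC_posv Cs_pos Cy; have y'_pos := prodC_posv Cs_pos Cy'.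
have yy' : y = y'.
  apply: blk_rescaled_Delta_eq Dy Dy' _.
  apply/(trImx_lnvB_eq0P ms_gt0 y_pos y'_pos).
  have := trImx_lnv_monomial v y_pos; have := trImx_lnv_monomial v' y'_pos.
  rewrite -yv_y'v' Mv Mv'; set z := lnv _ => zy' zy.
  have -> : lnv y' - lnv y = (z - lnv y) - (z - lnv y').
    by rewrite opprB [RHS]addrC addrA subrK.
  by rewrite mulmxBr zy zy' subrr.
split=> //; move: yv_y'v'; rewrite -yy' !Zc_paramE //.
by move=> /expv_inj /addrI.
Qed.

End Parametrization.

Theorem corollary6 (R : realType) (n l : nat) (ms : 'I_l -> nat)
  (hms : forall i, (0 < ms i)%N)
  (B : 'M[R]_(n, \sum_(i < l) ms i))
  (c : 'cV[R]_(\sum_(i < l) ms i)) (hc : posv c)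
  (Cs : forall i : 'I_l, set 'cV[R]_(ms i))
  (hcone : forall i, is_cone (Cs i))
  (hCpos : forall i y, Cs i y -> posv y)
  (hCne : exists y, prodC Cs y)
  (Mg : 'M[R]_(\sum_(i < l) (ms i).-1, n))
  (hMg : (B *m Imx R ms) *m Mg *m (B *m Imx R ms) = B *m Imx R ms) :
  let M := B *m Imx R ms in
  let E := Imx R ms *m Mg in
  let Zc := [set x : 'cV[R]_n | posv x /\ prodC Cs (hadm c (mpow x B))] in
  dimker M = 0%N ->
  [/\ Zc = [set z | exists y v, Pset Cs y /\ orthc (imcols M) v /\
                      z = hadm (mpow (hadm y (invv c)) E) (expv v)],
      Zc !=set0 &
      ((exists x0, Zc = [set x0]) <->
         (is_affdim (Pset Cs) 0 /\ dimorth_im M = 0%N))].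
Proof.
move=> M E Zc' /ginv_left_inverse /(_ hMg) MgM.
have Zc_eq : Zc' = [set z | exists y v, Pset Cs y /\ orthc (imcols M) v /\
                              z = Zc_param c Mg y v].
  apply/seteqP; split=> [x /(Zc_param_surj hms hc MgM hcone hCpos) | x].
    by move=> [y [v [Py [Mv ->]]]]; exists y, v; rewrite orthc_imcolsE.
  move=> [y [v [Py [/orthc_imcolsE Mv ->]]]].
  exact: (Zc_param_mem hms hc MgM hcone hCpos).
have P_ne : Pset Cs !=set0.
  by have [z /(prodC_normalize hms hcone hCpos) [y Py _]] := hCne; exists y.
have [y0 Py0] := P_ne.
split=> //.
  exists (Zc_param c Mg y0 0).
  by apply: (Zc_param_mem hms hc MgM hcone hCpos) => //; rewrite mulmx0.
rewrite Zc_eq set1_image2 ?is_affdim0 ?dimorth_im_eq0 //.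
- by split=> [[P1 O1] | [[_ P1] O1]].
- move=> y y' v v' Py Py' /orthc_imcolsE Mv /orthc_imcolsE Mv'.
  exact: (Zc_param_inj hms hc MgM hCpos Py Py' Mv Mv').
- by exists 0; apply/orthc_imcolsE; rewrite mulmx0.
Qed.
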